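(* Let $q\ge 2$. The class of rational subsets of $\mathrm{BS}(1,q)$ is not closed under intersection: there exist rational subsets $R_1,R_2\subseteq\mathrm{BS}(1,q)$ such that $R_1\cap R_2$ is not rational.
   Context: $\mathrm{BS}(1,q)$ is identified with $\mathbb{Z}[\tfrac1q]\rtimes\mathbb{Z}$ with $(r,m)(r',m')=(r+q^m r',m+m')$ and generators $a=(1,0)$, $t=(0,1)$. A subset is rational if it is accepted by a finite automaton whose edges are labelled by $a^{\pm1},t^{\pm1}$, i.e. it is the set of products of edge labels along runs from an initial to a final state. *)

From HB Require Import structures.
From mathcomp Require Import all_boot all_order all_algebra.
Set Implicit Arguments. Unset Strict Implicit. Unset Printing Implicit Defensive.
Import Order.TTheory GRing.Theory Num.Theory.
Local Open Scope ring_scope.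

(* BS(1,q) = Z[1/q] ⋊ Z, realised inside rat * int with the product
   (r,m)(r',m') = (r + q^m r', m + m').  Every element reachable from the
   generators lies in Z[1/q] x Z, so rational subsets are subsets of BS(1,q). *)
Definition BS := (rat * int)%type.

Definition bs_one : BS := (0, 0).

Definition bs_mul (q : nat) (x y : BS) : BS :=
  (x.1 + ((q%:R : rat) ^ x.2) * y.1, x.2 + y.2).

Inductive letter := La | LaInv | Lt | LtInv.

Definition letter_eval (l : letter) : BS :=
  match l with
  | La => (1, 0)
  | LaInv => (-1, 0)
  | Lt => (0, 1)
  | LtInv => (0, -1)
  end.

Definition word_eval (q : nat) (w : seq letter) : BS :=
  foldr (fun l acc => bs_mul q (letter_eval l) acc) bs_one w.

Record automaton (S : finType) := Automaton {
  aut_init : S -> bool;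
  aut_final : S -> bool;
  aut_edge : S -> letter -> S -> bool
}.

Fixpoint runs_from (S : finType) (A : automaton S) (s : S) (w : seq letter) : Prop :=
  match w with
  | [::] => aut_final A s
  | l :: w' => exists s' : S, aut_edge A s l s' /\ runs_from A s' w'
  end.

Definition accepted (q : nat) (S : finType) (A : automaton S) (g : BS) : Prop :=
  exists (s : S) (w : seq letter), aut_init A s /\ runs_from A s w /\ word_eval q w = g.

Definition rational_subset (q : nat) (R : BS -> Prop) : Prop :=
  exists (S : finType) (A : automaton S), forall g, R g <-> accepted q A g.

(* R1 = {t^n a t^-m} = {(q^n, n - m)} and R2 = {a^m} = {(m, 0)} are accepted by two-state and
   one-state automata, and R1 ∩ R2 = {(q^n, 0)}. Suppose an automaton with N states accepts
   these powers, and take a shortest accepted word w for (q^N, 0). Since one letter multiplies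
   the first coordinate by at most q, w has length at least N and can be pumped as x y z.
   The words x z, x y z, x y y z are accepted, so their values are powers (q^a, 0), (q^N, 0),
   (q^c, 0); comparing t-exponents shows y has t-exponent 0, so q^a, q^N, q^c are in
   arithmetic progression, which forces a = N. Then x z is a shorter word for (q^N, 0). *)
From HB Require Import structures.
From mathcomp Require Import all_boot all_order all_algebra.
From mathcomp Require Import zify ring lra.
Set Implicit Arguments. Unset Strict Implicit. Unset Printing Implicit Defensive.
Import Order.TTheory GRing.Theory Num.Theory.

Section Pumping.
Variables (S : finType) (A : automaton S).

Fixpoint reach (s : S) (w : seq letter) (f : S) : Prop :=
  if w is l :: w' then exists s', aut_edge A s l s' /\ reach s' w' f else s = f.

Lemma runs_fromE s w : runs_from A s w <-> exists2 f, reach s w f & aut_final A f.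
Proof.
elim: w s => [|l w IH] s /=; first by split; [exists s | move=> [f ->]].
split.
- by move=> [s' [e /IH [f r fin]]]; exists f => //; exists s'.
- by move=> [f [s' [e r]] fin]; exists s'; split => //; apply/IH; exists f.
Qed.

Lemma reach_cat s x y f : reach s (x ++ y) f <-> exists2 p, reach s x p & reach p y f.
Proof.
elim: x s => [|l x IH] s /=; first by split; [exists s | move=> [p ->]].
split.
- by move=> [s' [e /IH [p r1 r2]]]; exists p => //; exists s'.
- by move=> [p [s' [e r1]] r2]; exists s'; split => //; apply/IH; exists p.
Qed.

Definition pumpable s w f := exists x y z p,
  [/\ w = x ++ y ++ z, (0 < size y)%N, reach s x p, reach p y p & reach p z f].

Lemma pumpable_or_uniq_states s w f : reach s w f ->
  pumpable s w f \/
  exists V : seq S, [/\ uniq V, size V = (size w).+1 &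
    forall v, v \in V -> exists u1 u2, [/\ w = u1 ++ u2, reach s u1 v & reach v u2 f]].
Proof.
elim: w s => [|l w IH] s /=.
  move=> <-; right; exists [:: s]; split => // v; rewrite inE => /eqP ->.
  by exists [::], [::].
move=> [s' [e r]]; case: (IH s' r) => [[x [y [z [p [-> y_gt0 r1 r2 r3]]]]] | [V [uV sV hV]]].
  by left; exists (l :: x), y, z, p; split => //; exists s'.
have [sV' | s_notin] := boolP (s \in V).
  have [u1 [u2 [-> r1 r2]]] := hV s sV'.
  by left; exists [::], (l :: u1), u2, s; split => //; exists s'.
right; exists (s :: V); split; [by rewrite /= s_notin | by rewrite /= sV |].
move=> v; rewrite inE => /predU1P [-> | vV].
  by exists [::], (l :: w); split => //; exists s'.
have [u1 [u2 [-> r1 r2]]] := hV v vV.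
by exists (l :: u1), u2; split => //; exists s'.
Qed.

Lemma reach_pumping s w f : (#|S| <= size w)%N -> reach s w f -> pumpable s w f.
Proof.
move=> w_ge /pumpable_or_uniq_states [pump | [V [uV sV _]]]; first exact: pump.
by have := max_card (mem V); rewrite (card_uniqP uV) sV; lia.
Qed.

Lemma runs_pumping s w : (#|S| <= size w)%N -> runs_from A s w ->
  exists x y z, [/\ w = x ++ y ++ z, (0 < size y)%N,
                    runs_from A s (x ++ z) & runs_from A s (x ++ y ++ y ++ z)].
Proof.
move=> w_ge /runs_fromE [f r fin].
have [x [y [z [p [-> y_gt0 r1 r2 r3]]]]] := reach_pumping w_ge r.
exists x, y, z; split => //; apply/runs_fromE; exists f => //; apply/reach_cat; exists p => //.
by apply/reach_cat; exists p => //; apply/reach_cat; exists p.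
Qed.

End Pumping.

Lemma rational_subset_ext q (R R' : BS -> Prop) :
  (forall g, R g <-> R' g) -> rational_subset q R -> rational_subset q R'.
Proof. by move=> RR' [S [A hA]]; exists S, A => g; rewrite -RR'. Qed.

Lemma expn_twice_le q b a : (2 <= q)%N -> (b < a)%N -> (2 * q ^ b <= q ^ a)%N.
Proof.
move=> q_ge2 ba; apply: (leq_trans _ (leq_pexp2l (ltnW q_ge2) ba)).
by rewrite expnS leq_mul2r q_ge2 orbT.
Qed.

Lemma expn_ap_eq q a b c : (2 <= q)%N -> (q ^ a + q ^ c = 2 * q ^ b)%N -> a = b.
Proof.
move=> q_ge2 E; have q_gt0 : (0 < q)%N by apply: ltnW.
have qa_gt0 : (0 < q ^ a)%N by rewrite expn_gt0 q_gt0.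
have qc_gt0 : (0 < q ^ c)%N by rewrite expn_gt0 q_gt0.
case: (ltngtP a b) => // [ab | ba]; last by have := expn_twice_le q_ge2 ba; lia.
have qab : (q ^ a < q ^ b)%N by rewrite ltn_exp2l.
have bc : (b < c)%N by rewrite -(ltn_exp2l _ _ q_ge2); lia.
by have := expn_twice_le q_ge2 bc; lia.
Qed.

Local Open Scope ring_scope.

Lemma bs_mulA q : (0 < q)%N -> forall x y z,
  bs_mul q (bs_mul q x y) z = bs_mul q x (bs_mul q y z).
Proof.
move=> q_gt0 [x1 x2] [y1 y2] [z1 z2]; rewrite /bs_mul /=.
have q_neq0 : (q%:R : rat) != 0 by rewrite pnatr_eq0 -lt0n.
by rewrite expfzDr //; congr (_, _); ring.
Qed.

Lemma bs_mul1 q x : bs_mul q bs_one x = x.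
Proof. by case: x => x1 x2; rewrite /bs_mul /= expr0z mul1r !add0r. Qed.

Lemma word_eval_cat q x y : (0 < q)%N ->
  word_eval q (x ++ y) = bs_mul q (word_eval q x) (word_eval q y).
Proof.
move=> q_gt0; elim: x => [|l x IH] /=; first by rewrite bs_mul1.
by rewrite IH bs_mulA.
Qed.

Section BaumslagSolitar.
Variables (q : nat).
Hypothesis q_ge2 : (2 <= q)%N.
Local Notation Q := (q%:R : rat).

Lemma word_eval_nseq_Lt n : word_eval q (nseq n Lt) = (0, n%:Z).
Proof.
elim: n => //= n ->; rewrite /bs_mul /= mulr0 addr0; congr (_, _); lia.
Qed.

Lemma word_eval_nseq_LtInv n : word_eval q (nseq n LtInv) = (0, - n%:Z).
Proof.
elim: n => //= n ->; rewrite /bs_mul /= mulr0 addr0; congr (_, _); lia.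
Qed.

Lemma word_eval_nseq_La n : word_eval q (nseq n La) = (n%:R, 0).
Proof.
elim: n => //= n ->; rewrite /bs_mul /= expr0z mul1r add0r.
by rewrite -addn1 natrD addrC.
Qed.

Lemma word_eval_norm_le w : `|(word_eval q w).1| <= Q ^+ size w.
Proof.
have Q_ge2 : 2 <= Q by rewrite (ler_nat _ 2 q).
have Q_gt0 : 0 < Q by apply: lt_le_trans Q_ge2.
elim: w => [|l w IH] /=; first by rewrite normr0 expr0.
have P_ge1 : 1 <= Q ^+ size w by rewrite exprn_ege1 // (le_trans _ Q_ge2).
rewrite exprS; set g := (word_eval q w).1 in IH *; set P := Q ^+ size w in IH P_ge1 *.
case: l => /=.
- by rewrite expr0z mul1r (le_trans (ler_normD _ _)) // normr1; nra.
- by rewrite expr0z mul1r (le_trans (ler_normD _ _)) // normrN normr1; nra.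
- by rewrite expr1z add0r normrM gtr0_norm //; nra.
- rewrite exprN1 add0r normrM gtr0_norm ?invr_gt0 //.
  have Qinv_le1 : Q^-1 <= 1 by rewrite invf_le1 // (le_trans _ Q_ge2).
  have Qinv_ge0 : 0 <= Q^-1 by rewrite invr_ge0 ltW.
  by move: Qinv_le1 Qinv_ge0; set u := Q^-1; nra.
Qed.

Lemma word_eval_pow_size w n e : word_eval q w = (Q ^+ n, e) -> (n <= size w)%N.
Proof.
move=> ew; have := word_eval_norm_le w.
by rewrite ew /= ger0_norm ?exprn_ge0 // -!natrX ler_nat leq_exp2l.
Qed.

(* The t-exponent of Y must vanish, so the first coordinates are in arithmetic progression. *)
Lemma bs_pump_pow_eq X Y Z a b c :
  bs_mul q X Z = (Q ^+ a, 0) ->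
  bs_mul q X (bs_mul q Y Z) = (Q ^+ b, 0) ->
  bs_mul q X (bs_mul q Y (bs_mul q Y Z)) = (Q ^+ c, 0) -> a = b.
Proof.
case: X => x1 x2; case: Y => r e; case: Z => z1 z2; rewrite /bs_mul /=.
move=> [ea e2a] [eb e2b] [ec e2c].
have e0 : e = 0 by lia.
rewrite e0 expr0z !mul1r in eb ec.
have E : Q ^+ a + Q ^+ c = 2 * Q ^+ b by rewrite -ea -eb -ec; ring.
move/eqP: E; rewrite -!natrX -natrD -natrM eqr_nat => /eqP.
exact: expn_ap_eq.
Qed.

Definition tat_set (g : BS) : Prop := exists n m : nat, g = (Q ^+ n, n%:Z - m%:Z).
Definition a_pow_set (g : BS) : Prop := exists m : nat, g = (m%:R, 0).
Definition a_qpow_set (g : BS) : Prop := exists n : nat, g = (Q ^+ n, 0).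

Lemma tat_a_pow_setE g : tat_set g /\ a_pow_set g <-> a_qpow_set g.
Proof.
split.
- by move=> [[n [m ->]] [k [_ nm]]]; exists n; rewrite nm.
- move=> [n ->]; split; first by exists n, n; rewrite subrr.
  by exists (q ^ n)%N; rewrite natrX.
Qed.

Definition aut_tat : automaton bool :=
  Automaton (fun s => ~~ s) id
    (fun s l s' => match s, l, s' with
                   | false, Lt, false | false, La, true | true, LtInv, true => true
                   | _, _, _ => false
                   end).

Definition aut_astar : automaton unit :=
  Automaton (fun _ => true) (fun _ => true) (fun _ l _ => if l is La then true else false).

Lemma runs_aut_tat_true w : runs_from aut_tat true w <-> exists m, w = nseq m LtInv.
Proof.
elim: w => [|l w IH] /=; first by split => // _; exists 0%N.
split.
- by move=> [[] [+ r]]; case: l => // _; have [m ->] := IH.1 r; exists m.+1.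
- by move=> [[|m] //= [-> wE]]; exists true; split => //; apply/IH; exists m.
Qed.

Lemma runs_aut_tat_false w :
  runs_from aut_tat false w <-> exists n m, w = nseq n Lt ++ La :: nseq m LtInv.
Proof.
elim: w => [|l w IH] /=; first by split => // [[[|n] [m]]].
split.
- move=> [[] [+ r]]; case: l => // _.
    by have [m ->] := (runs_aut_tat_true w).1 r; exists 0%N, m.
  by have [n [m ->]] := IH.1 r; exists n.+1, m.
- move=> [[|n] [m]] /= [-> wE].
    by exists true; split => //; apply/runs_aut_tat_true; exists m.
  by exists false; split => //; apply/IH; exists n, m.
Qed.

Lemma runs_aut_astar w : runs_from aut_astar tt w <-> exists m, w = nseq m La.
Proof.
elim: w => [|l w IH] /=; first by split => // _; exists 0%N.
split.
- by move=> [[] [+ r]]; case: l => // _; have [m ->] := IH.1 r; exists m.+1.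
- by move=> [[|m] //= [-> wE]]; exists tt; split => //; apply/IH; exists m.
Qed.

Lemma word_eval_tat n m :
  word_eval q (nseq n Lt ++ La :: nseq m LtInv) = (Q ^+ n, n%:Z - m%:Z).
Proof.
rewrite word_eval_cat ?(ltnW q_ge2) //= word_eval_nseq_Lt word_eval_nseq_LtInv.
rewrite /bs_mul /= -exprnP expr0z mulr0 addr0 mulr1 add0r; congr (_, _); lia.
Qed.

Lemma rational_tat_set : rational_subset q tat_set.
Proof.
exists _, aut_tat => g; split.
- move=> [n [m ->]]; exists false, (nseq n Lt ++ La :: nseq m LtInv).
  by split => //; split; [apply/runs_aut_tat_false; exists n, m | exact: word_eval_tat].
- move=> [[] [w [// _ [/runs_aut_tat_false [n [m ->]] <-]]]].
  by exists n, m; rewrite word_eval_tat.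
Qed.

Lemma rational_a_pow_set : rational_subset q a_pow_set.
Proof.
exists _, aut_astar => g; split.
- move=> [m ->]; exists tt, (nseq m La); split => //.
  by split; [apply/runs_aut_astar; exists m | exact: word_eval_nseq_La].
- move=> [[] [w [_ [/runs_aut_astar [m ->] <-]]]].
  by exists m; rewrite word_eval_nseq_La.
Qed.

Lemma a_qpow_set_not_rational : ~ rational_subset q a_qpow_set.
Proof.
move=> [S [A accA]]; have q_gt0 : (0 < q)%N by apply: ltnW.
have in_set w s : aut_init A s -> runs_from A s w -> a_qpow_set (word_eval q w).
  by move=> init r; apply/accA; exists s, w.
pose N := #|S|.
suff no_run w s : aut_init A s -> runs_from A s w -> word_eval q w <> (Q ^+ N, 0).
  have [s [w [init [r ew]]]] : accepted q A (Q ^+ N, 0) by apply/accA; exists N.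
  exact: (no_run w s init r ew).
have [n] := ubnP (size w); elim: n w s => // n IH w s.
rewrite ltnS => w_le init r ew.
have [x [y [z [wE y_gt0 r_xz r_xyyz]]]] := runs_pumping (word_eval_pow_size ew) r.
have [a ea] := in_set _ _ init r_xz.
have [c ec] := in_set _ _ init r_xyyz.
rewrite !word_eval_cat // in ea ec; rewrite wE !word_eval_cat // in ew.
apply: (IH (x ++ z) s _ init r_xz); first by rewrite wE !size_cat in w_le *; lia.
by rewrite word_eval_cat // ea (bs_pump_pow_eq ea ew ec).
Qed.

End BaumslagSolitar.

Theorem mainTheorem4 (q : nat) (hq : (2 <= q)%N) :
  exists R1 R2 : BS -> Prop,
    rational_subset q R1 /\ rational_subset q R2 /\
    ~ rational_subset q (fun g => R1 g /\ R2 g).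
Proof.
exists (tat_set q), a_pow_set.
split; first exact: rational_tat_set.
split; first exact: rational_a_pow_set.
move/(rational_subset_ext (tat_a_pow_setE q)).
exact: a_qpow_set_not_rational.
Qed.
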